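(* Let $M$ be a totally ordered finite monoid. For all $a,b,c\in M$, if $a\le_J b$ and $a\le_J c$ then $a\le_J bc$.
   Context: For $m$ in a monoid $M$, $J(m)=\{xmy:x,y\in M\}$; $a\le_J b$ iff $J(a)\subseteq J(b)$. $M$ is totally ordered if for all $a,b\in M$, $J(ab)=J(a)$ or $J(ab)=J(b)$. *)

From HB Require Import structures.
From mathcomp Require Import all_boot monoid.
Set Implicit Arguments. Unset Strict Implicit. Unset Printing Implicit Defensive.

Local Open Scope group_scope.

HB.structure Definition FinMonoid := {M of Monoid M & Finite M}.
Notation finMonoidType := FinMonoid.type.

Definition Jideal (M : monoidType) (m : M) : M -> Prop :=
  fun z => exists x y : M, z = x * m * y.

Definition leJ (M : monoidType) (a b : M) : Prop :=
  forall z, Jideal a z -> Jideal b z.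

Definition Jeq (M : monoidType) (a b : M) : Prop :=
  forall z, Jideal a z <-> Jideal b z.

Definition totally_ordered (M : monoidType) : Prop :=
  forall a b : M, Jeq (a * b) a \/ Jeq (a * b) b.

From HB Require Import structures.
From mathcomp Require Import all_boot monoid.

Local Open Scope group_scope.

Lemma leJ_mul_total (M : monoidType) :
  totally_ordered M ->
  forall a b c : M, leJ a b -> leJ a c -> leJ a (b * c).
Proof.
move=> totM a b c leab leac z Jaz.
by case: (totM b c) => Jbc; apply/Jbc; [exact: leab | exact: leac].
Qed.

Theorem lemmaB3 (M : finMonoidType) :
  totally_ordered M ->
  forall a b c : M, leJ a b -> leJ a c -> leJ a (b * c).
Proof. exact: leJ_mul_total. Qed.
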